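(* Let $A$ be a finite abelian group, let $H$ be a subgroup of $A$, let $A_2$ be the Sylow $2$-subgroup of $A$ and $H_2$ the Sylow $2$-subgroup of $H$, and suppose $|H_2|\neq 2$. Then $\Gamma_{A_2,H_2}$ admits a perfect code if and only if $\Gamma_{A,H}$ admits a perfect code.
   Context: Abelian groups are written additively with identity $0$. For a subgroup $H$ of a finite abelian group $A$, the subgroup sum graph $\Gamma_{A,H}$ is the simple undirected graph with vertex set $A$ in which distinct vertices $x,y$ are adjacent if and only if $x+y\in H\setminus\{0\}$. A perfect code in a graph is a set $C$ of vertices that is independent and such that every vertex not in $C$ is adjacent to exactly one vertex of $C$. *)

From mathcomp Require Import all_boot all_fingroup all_solvable.
Set Implicit Arguments. Unset Strict Implicit. Unset Printing Implicit Defensive.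

(* Finite abelian groups are represented (multiplicatively) as abelian
   subgroups of a finGroupType; the identity 0 corresponds to 1%g and
   x + y corresponds to x * y. *)

Local Open Scope group_scope.

Section SubgroupSumGraph.
Variable gT : finGroupType.

Definition ssg_adj (H : {set gT}) (x y : gT) : bool :=
  (x != y) && (x * y \in H :\ 1).

Definition is_perfect_code (A H C : {set gT}) : Prop :=
  [/\ C \subset A,
      (forall x y, x \in C -> y \in C -> ~~ ssg_adj H x y) &
      (forall x, x \in A :\: C -> #|[set c in C | ssg_adj H x c]| = 1%N)].

Definition has_perfect_code (A H : {set gT}) : Prop :=
  exists C : {set gT}, is_perfect_code A H C.

End SubgroupSumGraph.

From mathcomp Require Import all_boot all_fingroup all_solvable.
Local Open Scope group_scope.
Set Implicit Arguments. Unset Strict Implicit. Unset Printing Implicit Defensive.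

(* For |H| <> 2, Gamma_{A,H} has a perfect code iff every square a^2 (a in A)
   that lies in H is the square of an element of H.  Necessity: if a code
   element c had c^2 in H \ 1, then c^-1 would be in the code as well, and a
   third element of the coset Hc (there is one since |H| <> 2) would be
   adjacent to both.  Sufficiency: choose one representative per H-coset, an
   element of order at most 2 in each self-inverse coset (if y^2 = h^2 then
   (h^-1 y)^2 = 1) and mutually inverse ones in mutually inverse cosets; then
   x is adjacent exactly to the representative of H x^-1.  This square
   condition only sees 2-parts, since an element of odd order lies in H as
   soon as its square does. *)

Definition sq_descends (gT : finGroupType) (A H : {set gT}) : Prop :=
  forall a, a \in A -> a * a \in H -> exists2 h, h \in H & a * a = h * h.

Lemma odd_order_sq_mem (gT : finGroupType) (G : {group gT}) (x : gT) :
  odd #[x] -> x * x \in G -> x \in G.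
Proof.
move=> odd_x xxG; suff -> : x = (x * x) ^+ uphalf #[x] by rewrite groupX.
by rewrite -expg2 -expgM mul2n odd_uphalfK // expgSr expg_order mul1g.
Qed.

Lemma group_constt (gT : finGroupType) (G : {group gT}) pi x :
  x \in G -> x.`_pi \in G.
Proof. by rewrite -cycle_subG => /subsetP; apply; apply: cycle_constt. Qed.

Lemma mem_abelian_Sylow (gT : finGroupType) p (G P : {group gT}) x :
  abelian G -> p.-Sylow(G) P -> x \in G -> (x \in P) = p.-elt x.
Proof.
move=> abG sylP; apply: (mem_normal_Hall sylP).
by rewrite -sub_abelian_normal // (pHall_sub sylP).
Qed.

Lemma mulgGsq (gT : finGroupType) (x y : gT) :
  commute x y -> x * y * (x * y) = x * x * (y * y).
Proof. by move=> cxy; rewrite -mulgA (mulgA y) -cxy !mulgA. Qed.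

Section PerfectCodeSquares.
Variables (gT : finGroupType) (A H : {group gT}).
Hypotheses (abA : abelian A) (sHA : H \subset A).

Let cAA x y : x \in A -> y \in A -> commute x y.
Proof. by move=> xA yA; apply: (centsP abA). Qed.

Section PerfectCode.
Variable C : {set gT}.
Hypothesis pcC : is_perfect_code A H C.

Let sCA : C \subset A. Proof. by case: pcC. Qed.
Let indepC x y : x \in C -> y \in C -> ~~ ssg_adj H x y.
Proof. by case: pcC => _ indep _; apply: indep. Qed.

Lemma perfect_code_adj_uniq x c1 c2 :
    x \in A -> x \notin C -> c1 \in C -> c2 \in C ->
  ssg_adj H x c1 -> ssg_adj H x c2 -> c1 = c2.
Proof.
move=> xA xC c1C c2C adj1 adj2; case: pcC => _ _ /(_ x).
rewrite inE xC xA => /(_ isT) /eqP/cards1P[c Ec].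
have mem_c d : d \in C -> ssg_adj H x d -> d = c.
  by move=> dC adj; apply/set1P; rewrite -Ec inE dC.
by rewrite (mem_c c1 c1C adj1) (mem_c c2 c2C adj2).
Qed.

Lemma perfect_code_dominates x :
  x \in A -> x \notin C -> exists2 c, c \in C & ssg_adj H x c.
Proof.
move=> xA xC; case: pcC => _ _ /(_ x); rewrite inE xC xA => /(_ isT) /eqP.
case/cards1P=> c Ec; have : c \in [set c in C | ssg_adj H x c] by rewrite Ec set11.
by rewrite inE => /andP[]; exists c.
Qed.

Lemma perfect_code_invg c : c \in C -> c * c \in H -> c * c != 1 -> c^-1 \in C.
Proof.
move=> cC ccH cc1; apply/negPn/negP => ciC.
have ciA : c^-1 \in A by rewrite groupV (subsetP sCA).
have [c0 c0C] := perfect_code_dominates ciA ciC.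
rewrite /ssg_adj !inE => /andP[_ /andP[cic0_1 cic0H]].
suff : ssg_adj H c c0 by rewrite (negbTE (indepC cC c0C)).
rewrite /ssg_adj !inE; apply/and3P; split.
- by apply: contraNneq cic0_1 => <-; rewrite mulVg.
- by rewrite -eq_invg_mul; apply: contraNneq ciC => ->.
- have -> : c * c0 = c * c * (c^-1 * c0) by rewrite mulgA mulgK.
  exact: groupM.
Qed.

Lemma perfect_code_sq_eq1 c : #|H| <> 2 -> c \in C -> c * c \in H -> c * c = 1.
Proof.
move=> nH2 cC ccH; apply/eqP/negPn/negP => cc1.
have ciC := perfect_code_invg cC ccH cc1.
have c_ci : c != c^-1 by rewrite eq_sym eq_invg_mul.
have cHc : c \in H :* c := rcoset_refl H c.
have ciHc : c^-1 \in H :* c by rewrite mem_rcoset -invMg groupV.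
have [z zHc] : exists2 z, z \in H :* c & z \notin [set c; c^-1].
  apply/subsetPn/negP => sub; apply: nH2; rewrite -(card_rcoset H c).
  have -> : H :* c = [set c; c^-1] :> {set gT}.
    apply/eqP; rewrite eqEsubset sub; apply/subsetP => w.
    by rewrite !inE => /orP[]/eqP->.
  by rewrite cards2 c_ci.
rewrite !inE negb_or => /andP[zc zci].
have zcH : z * c^-1 \in H by rewrite -mem_rcoset.
have zA : z \in A.
  by rewrite -(mulgKV c z) groupM ?(subsetP sHA _ zcH) ?(subsetP sCA c cC).
have zcH' : z * c \in H.
  have -> : z * c = z * c^-1 * (c * c) by rewrite mulgA mulgKV.
  exact: groupM.
have adj_zc : ssg_adj H z c.
  by rewrite /ssg_adj !inE zc zcH' -[c in z * c]invgK -eq_mulgV1 zci.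
have adj_zci : ssg_adj H z c^-1 by rewrite /ssg_adj !inE zci -eq_mulgV1 zc.
have zC : z \notin C by apply: contraL adj_zc => zC; apply: indepC.
have := perfect_code_adj_uniq zA zC cC ciC adj_zc adj_zci.
by move/eqP; rewrite (negbTE c_ci).
Qed.

End PerfectCode.

Lemma perfect_code_sq_descends : #|H| <> 2 -> has_perfect_code A H -> sq_descends A H.
Proof.
move=> nH2 [C pcC] a aA aaH.
have [c cC acH] : exists2 c, c \in C & a * c \in H.
  have [aC | aC] := boolP (a \in C); first by exists a.
  have [c cC] := perfect_code_dominates pcC aA aC.
  by rewrite /ssg_adj !inE => /and3P[_ _ acH]; exists c.
have cA : c \in A by case: pcC => /subsetP sCA _ _; apply: sCA.
have sq_ac : a * c * (a * c) = a * a * (c * c) by apply/mulgGsq/cAA.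
have ccH : c * c \in H.
  by rewrite -(mulKg (a * a) (c * c)) -sq_ac groupM ?groupV // groupM.
exists (a * c) => //.
by rewrite sq_ac (perfect_code_sq_eq1 pcC nH2 cC ccH) mulg1.
Qed.

Lemma rcoset_subA y : y \in A -> H :* y \subset A.
Proof.
move=> yA; apply/subsetP => z; rewrite mem_rcoset => zyH.
by rewrite -(mulgKV y z) groupM // (subsetP sHA).
Qed.

Lemma mem_rcosetV x y : x \in A -> y \in A -> (y \in H :* x^-1) = (x * y \in H).
Proof. by move=> xA yA; rewrite mem_rcoset invgK cAA. Qed.

Section CosetCode.
Hypothesis sqAH : sq_descends A H.

(* A self-inverse coset is represented by an element of order at most 2;
   of two mutually inverse distinct cosets, one is represented by its
   [repr] (the one whose [repr] has smaller [enum_rank]) and the other by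
   the inverse of that element. *)
Definition coset_rep (y : gT) : gT :=
  let K := H :* y in let K' := H :* y^-1 in
  if K == K' then odflt 1 [pick z in K | z * z == 1]
  else if (enum_rank (repr K) < enum_rank (repr K'))%N then repr K
  else (repr K')^-1.

Lemma coset_rep_invg y : coset_rep y^-1 = (coset_rep y)^-1.
Proof.
rewrite /coset_rep invgK eq_sym; case: eqP => [->|ne].
  case: pickP => [z /andP[_ zz]|_]; last by rewrite invg1.
  by apply/eqP; rewrite eq_sym eq_invg_mul.
have nr : repr (H :* y^-1) != repr (H :* y).
  apply: contra_not_neq ne => e.
  have := mem_repr_rcoset H y^-1; rewrite e => /rcoset_eqP <-.
  by apply/esym/rcoset_eqP/mem_repr_rcoset.
case: ltngtP => [|_|/val_inj/enum_rank_inj eq_r]; rewrite ?invgK //.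
by rewrite eq_r eqxx in nr.
Qed.

Lemma coset_rep_rcoset y z : y \in A -> z \in H :* y -> coset_rep z = coset_rep y.
Proof.
move=> yA zHy; have zA := subsetP (rcoset_subA yA) z zHy.
have Hzy : H :* z = H :* y by apply/rcoset_eqP.
suff Hzyi : H :* z^-1 = H :* y^-1 by rewrite /coset_rep Hzy Hzyi.
apply/rcoset_eqP.
by rewrite mem_rcosetV ?groupV // -groupV invMg invgK -mem_rcoset.
Qed.

Lemma mem_coset_rep y : y \in A -> coset_rep y \in H :* y.
Proof.
move=> yA; rewrite /coset_rep; case: eqP => [Hy_Hyi|_].
  case: pickP => [z /andP[]//|no_involution]; exfalso.
  have yyH : y * y \in H.
    have : y^-1 \in H :* y by rewrite Hy_Hyi rcoset_refl.
    by rewrite mem_rcoset -invMg groupV.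
  have [h hH yy_hh] := sqAH yA yyH.
  have := no_involution (h^-1 * y); rewrite mem_rcoset mulgK groupV hH /=.
  have chy : commute h^-1 y by apply: cAA => //; rewrite groupV (subsetP sHA).
  by rewrite mulgGsq // yy_hh -invMg mulVg eqxx.
case: ifP => _; first exact: mem_repr_rcoset.
have rA : repr (H :* y^-1) \in A.
  by apply: subsetP (rcoset_subA _) _ (mem_repr_rcoset H y^-1); rewrite groupV.
by rewrite mem_rcoset -invMg groupV -(mem_rcosetV yA rA) mem_repr_rcoset.
Qed.

Lemma coset_repA y : y \in A -> coset_rep y \in A.
Proof. by move=> yA; apply: subsetP (rcoset_subA yA) _ (mem_coset_rep yA). Qed.

Lemma coset_rep_id y : y \in A -> coset_rep (coset_rep y) = coset_rep y.
Proof. by move=> yA; apply: coset_rep_rcoset yA (mem_coset_rep yA). Qed.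

Lemma coset_code_adj x c :
  x \in A -> c \in coset_rep @: A -> ssg_adj H x c -> c = coset_rep x^-1.
Proof.
move=> xA /imsetP[y yA ->]; rewrite /ssg_adj !inE => /and3P[_ _ xcH].
rewrite -(coset_rep_id yA); apply: coset_rep_rcoset; first by rewrite groupV.
by rewrite mem_rcosetV ?coset_repA.
Qed.

Lemma sq_descends_perfect_code : has_perfect_code A H.
Proof.
exists (coset_rep @: A); split.
- by apply/subsetP => _ /imsetP[y yA ->]; apply: coset_repA.
- move=> _ c /imsetP[y yA ->] cC; apply/negP => adj.
  move: (adj) (coset_code_adj (coset_repA yA) cC adj).
  rewrite coset_rep_invg coset_rep_id // => + c_inv.
  by rewrite /ssg_adj !inE c_inv mulgV eqxx andbF.
move=> x; rewrite inE => /andP[xC xA].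
suff -> : [set c in coset_rep @: A | ssg_adj H x c] = [set coset_rep x^-1].
  exact: cards1.
have rxC : coset_rep x^-1 \in coset_rep @: A by rewrite imset_f ?groupV.
apply/setP => c; rewrite !inE; apply/andP/eqP => [[cC adj]|->].
  exact: coset_code_adj.
split=> //; rewrite /ssg_adj !inE; apply/and3P; split.
- by apply: contraNneq xC => ->.
- apply: contraNneq xC => x_rx1; have : x^-1 == coset_rep x^-1.
    by rewrite eq_invg_mul x_rx1.
  by rewrite coset_rep_invg (inj_eq invg_inj) => /eqP ->; rewrite imset_f.
- by rewrite -mem_rcosetV ?coset_repA ?groupV // mem_coset_rep ?groupV.
Qed.

End CosetCode.

Lemma perfect_code_iff_sq_descends :
  #|H| <> 2 -> has_perfect_code A H <-> sq_descends A H.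
Proof.
move=> nH2; split; first exact: perfect_code_sq_descends.
exact: sq_descends_perfect_code.
Qed.

End PerfectCodeSquares.

Lemma sq_descends_Sylow2 (gT : finGroupType) (A H A2 H2 : {group gT}) :
    abelian A -> H \subset A -> 2.-Sylow(A) A2 -> 2.-Sylow(H) H2 ->
  sq_descends A H <-> sq_descends A2 H2.
Proof.
move=> abA sHA sylA2 sylH2; have abH := abelianS sHA abA.
have sA2A := subsetP (pHall_sub sylA2); have sH2H := subsetP (pHall_sub sylH2).
have sq_constt pi (x : gT) : (x * x).`_pi = x.`_pi * x.`_pi.
  exact: consttM (commute_refl x).
split=> [sqAH a aA2 aaH2 | sqA2H2 a aA aaH].
  have [h hH aa_hh] := sqAH a (sA2A a aA2) (sH2H _ aaH2).
  exists h.`_2.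
    by rewrite (mem_abelian_Sylow abH sylH2) ?group_constt ?p_elt_constt.
  rewrite -sq_constt -aa_hh constt_p_elt //.
  exact: mem_p_elt (pHall_pgroup sylA2) (groupM aA2 aA2).
have a2A2 : a.`_2 \in A2.
  by rewrite (mem_abelian_Sylow abA sylA2) ?group_constt ?p_elt_constt.
have a2a2H2 : a.`_2 * a.`_2 \in H2.
  by rewrite -sq_constt (mem_abelian_Sylow abH sylH2) ?group_constt ?p_elt_constt.
have [h2 h2H2 a2_h2] := sqA2H2 _ a2A2 a2a2H2.
have a2'H : a.`_2^' \in H.
  apply: odd_order_sq_mem; last by rewrite -sq_constt group_constt.
  by have := p_elt_constt 2^' a; rewrite /p_elt p'natE // dvdn2 negbK.
have cA x y : x \in A -> y \in A -> commute x y by move=> xA yA; apply: (centsP abA).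
exists (h2 * a.`_2^'); first by rewrite groupM // sH2H.
have h2A : h2 \in A by rewrite (subsetP sHA) // sH2H.
have a2'A : a.`_2^' \in A by rewrite group_constt.
rewrite (mulgGsq (cA _ _ h2A a2'A)) -a2_h2.
by rewrite -(mulgGsq (cA _ _ (group_constt _ aA) a2'A)) consttC.
Qed.

Theorem corollary3p6 (gT : finGroupType) (A H A2 H2 : {group gT}) :
  abelian A -> H \subset A ->
  A2 \in 'Syl_2(A) -> H2 \in 'Syl_2(H) -> #|H2| <> 2 ->
  has_perfect_code A2 H2 <-> has_perfect_code A H.
Proof.
move=> abA sHA; rewrite !inE => sylA2 sylH2 nH2.
have nH : #|H| <> 2.
  by move=> cardH; apply: nH2; rewrite (card_Hall sylH2) cardH part_pnat_id.
have sH2A2 : H2 \subset A2.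
  apply/subsetP => x xH2.
  have xA := subsetP sHA x (subsetP (pHall_sub sylH2) x xH2).
  by rewrite (mem_abelian_Sylow abA sylA2) // (mem_p_elt (pHall_pgroup sylH2)).
have abA2 := abelianS (pHall_sub sylA2) abA.
apply: iff_trans (perfect_code_iff_sq_descends abA2 sH2A2 nH2) _.
apply: iff_trans (iff_sym (perfect_code_iff_sq_descends abA sHA nH)).
exact: iff_sym (sq_descends_Sylow2 abA sHA sylA2 sylH2).
Qed.
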